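(* Every finitely generated co-Heyting algebra is precompact. Every finitely presented co-Heyting algebra is precompact and Hausdorff.
   Context: A co-Heyting algebra is a bounded distributive lattice $(L,0,1,\vee,\wedge)$ such that $a-b=\min\{c\in L: a\le b\vee c\}$ exists for all $a,b$ (finitely generated/presented in the language $\{0,1,\vee,\wedge,-\}$). For an ideal $I$, $L/I$ is the quotient by $a\equiv_I b\iff(a-b)\vee(b-a)\in I$. $\operatorname{Spec}L$ is the set of prime filters ordered by inclusion; height = foundation rank there; $\operatorname{codim}_La=\min\{\operatorname{height}\mathfrak p: a\in\mathfrak p\}$ ($+\infty$ if none); $dL=\{a:\operatorname{codim}_La\ge d\}$ is an ideal. $L$ is Hausdorff if every nonzero element has finite codimension; $L$ is precompact if $L/dL$ is finite for every positive integer $d$. *)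

From HB Require Import structures.
From mathcomp Require Import all_boot all_order.
Set Implicit Arguments. Unset Strict Implicit. Unset Printing Implicit Defensive.
Import Order.Theory.
Local Open Scope order_scope.

Section CoHeyting.
Context {disp : Order.disp_t} {L : tbDistrLatticeType disp}.

Definition is_coheyting (sub : L -> L -> L) : Prop :=
  forall a b, a <= b `|` sub a b /\ (forall c, a <= b `|` c -> sub a b <= c).

Inductive cterm (n : nat) : Type :=
| CVar of 'I_n
| CBot
| CTop
| CJoin of cterm n & cterm n
| CMeet of cterm n & cterm n
| CSub of cterm n & cterm n.

Fixpoint ceval (sub : L -> L -> L) (n : nat) (g : 'I_n -> L) (t : cterm n) : L :=
  match t with
  | CVar i => g i
  | CBot => \bot
  | CTop => \top
  | CJoin t1 t2 => ceval sub g t1 `|` ceval sub g t2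
  | CMeet t1 t2 => ceval sub g t1 `&` ceval sub g t2
  | CSub t1 t2 => sub (ceval sub g t1) (ceval sub g t2)
  end.

Definition generates (sub : L -> L -> L) (n : nat) (g : 'I_n -> L) : Prop :=
  forall x : L, exists t : cterm n, ceval sub g t = x.

Definition fin_generated (sub : L -> L -> L) : Prop :=
  exists (n : nat) (g : 'I_n -> L), generates sub g.

Definition prime_filter (p : L -> Prop) : Prop :=
  [/\ p \top, ~ p \bot,
      (forall a b, p a -> a <= b -> p b),
      (forall a b, p a -> p b -> p (a `&` b)) &
      (forall a b, p (a `|` b) -> p a \/ p b)].

Definition strict_sub (q p : L -> Prop) : Prop :=
  (forall x, q x -> p x) /\ (exists x, p x /\ ~ q x).

(* height_ge p n : the foundation rank (height) of p in Spec L is >= n.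
   (Elements outside the well-founded part count as having infinite height.) *)
Fixpoint height_ge (p : L -> Prop) (n : nat) : Prop :=
  match n with
  | 0 => True
  | n'.+1 => exists q, prime_filter q /\ strict_sub q p /\ height_ge q n'
  end.

(* codim a >= n  (codim = min height of a prime filter containing a, +oo if none) *)
Definition codim_ge (a : L) (n : nat) : Prop :=
  forall p, prime_filter p -> p a -> height_ge p n.

Definition dIdeal (d : nat) : L -> Prop := fun a => codim_ge a d.

Definition codim_finite (a : L) : Prop :=
  exists p, [/\ prime_filter p, p a & exists n, ~ height_ge p n].

Definition cong_mod (sub : L -> L -> L) (I : L -> Prop) (a b : L) : Prop :=
  I (sub a b `|` sub b a).

Definition quotient_finite (sub : L -> L -> L) (I : L -> Prop) : Prop :=
  exists s : seq L, forall a, exists2 b, b \in s & cong_mod sub I a b.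

Definition precompact (sub : L -> L -> L) : Prop :=
  forall d : nat, (0 < d)%N -> quotient_finite sub (dIdeal d).

Definition hausdorff : Prop :=
  forall a : L, a <> \bot -> codim_finite a.

End CoHeyting.

Definition coheyting_hom {d1 : Order.disp_t} {L : tbDistrLatticeType d1}
  {d2 : Order.disp_t} {M : tbDistrLatticeType d2}
  (subL : L -> L -> L) (subM : M -> M -> M) (f : L -> M) : Prop :=
  [/\ f \bot = \bot, f \top = \top,
      (forall x y, f (x `|` y) = f x `|` f y),
      (forall x y, f (x `&` y) = f x `&` f y) &
      (forall x y, f (subL x y) = subM (f x) (f y))].

Definition fin_presented {d1 : Order.disp_t} {L : tbDistrLatticeType d1}
  (sub : L -> L -> L) : Prop :=
  exists (n m : nat) (g : 'I_n -> L) (E : 'I_m -> cterm n * cterm n),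
    [/\ generates sub g,
        (forall j, ceval sub g (E j).1 = ceval sub g (E j).2) &
        (forall (d2 : Order.disp_t) (M : tbDistrLatticeType d2) (subM : M -> M -> M),
           is_coheyting subM ->
           forall h : 'I_n -> M,
             (forall j, ceval subM h (E j).1 = ceval subM h (E j).2) ->
             exists f : L -> M, coheyting_hom sub subM f /\ forall i, f (g i) = h i)].

From HB Require Import structures.
From mathcomp Require Import all_boot all_order.
From mathcomp Require Import boolp.
From mathcomp Require classical_sets.
From Stdlib Require Import ClassicalEpsilon.

(* Precompactness: in an algebra generated by g, a prime filter is determined by
   which g_i it contains and which prime filters lie strictly below it, so by
   induction there are finitely many prime filters of height < d; two elements
   lying in the same ones among these are congruent modulo dL.
   Hausdorffness: for a <> 0 in a finitely presented algebra, the universal property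
   maps it homomorphically into the finite sublattice generated by the finitely many
   values involved, with f a = a <> 0.  A prime filter containing a and avoiding
   ker f has bounded height: along a chain below it, the images under f strictly grow. *)

Set Implicit Arguments. Unset Strict Implicit. Unset Printing Implicit Defensive.
Import Order.Theory.
Local Open Scope order_scope.

Lemma finite_representatives (T : Type) (K : finType) (S : T -> Prop) (key : T -> K) :
  inhabited T -> exists R : K -> T, forall t, S t -> S (R (key t)) /\ key (R (key t)) = key t.
Proof.
move=> inhT; exists (fun k => epsilon inhT (fun u => S u /\ key u = k)) => t St.
exact: (epsilon_spec inhT (fun u => S u /\ key u = key t) (ex_intro _ t (conj St erefl))).
Qed.

Lemma ffun_asbool_eq_equiv (I : finType) (A B : I -> Prop) :
  [ffun i => `[< A i >]] = [ffun i => `[< B i >]] -> forall i, A i <-> B i.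
Proof. by move=> /ffunP e i; apply: asbool_eq_equiv; move: (e i); rewrite !ffunE. Qed.

Section BigDistributivity.
Context {disp : Order.disp_t} {T : tbDistrLatticeType disp}.

Lemma meet_joinsr (x : T) (I : Type) (r : seq I) (P : pred I) (G : I -> T) :
  x `&` \join_(i <- r | P i) G i = \join_(i <- r | P i) (x `&` G i).
Proof. exact: (big_morph _ (meetUr x) (meetx0 x)). Qed.

Lemma join_meetsr (x : T) (I : Type) (r : seq I) (P : pred I) (G : I -> T) :
  x `|` \meet_(i <- r | P i) G i = \meet_(i <- r | P i) (x `|` G i).
Proof. exact: (big_morph _ (joinIr x) (joinx1 x)). Qed.

End BigDistributivity.

Section PrimeFilters.
Context {disp : Order.disp_t} {L : tbDistrLatticeType disp}.
Implicit Types (x y z : L) (p q F J : L -> Prop).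

Definition is_filter F :=
  [/\ F \top, (forall x y, F x -> x <= y -> F y) & (forall x y, F x -> F y -> F (x `&` y))].

Definition is_ideal J :=
  [/\ J \bot, (forall x y, J y -> x <= y -> J x) & (forall x y, J x -> J y -> J (x `|` y))].

Lemma prime_filter_up p x y : prime_filter p -> p x -> x <= y -> p y.
Proof. by case=> _ _ + _ _; apply. Qed.

Lemma prime_filterT p : prime_filter p -> p \top.
Proof. by case. Qed.

Lemma prime_filter0 p : prime_filter p -> ~ p \bot.
Proof. by case. Qed.

Lemma prime_filterU p x y : prime_filter p -> p (x `|` y) <-> p x \/ p y.
Proof.
move=> pp; split; first by case: pp => _ _ _ _; apply.
by case=> px; apply: prime_filter_up px _; rewrite ?leUl ?leUr.
Qed.

Lemma prime_filterI p x y : prime_filter p -> p (x `&` y) <-> p x /\ p y.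
Proof.
move=> pp; split; last by case: pp => _ _ _ + _ [] => /[apply]/[apply].
by move=> pxy; split; apply: prime_filter_up pxy _; rewrite ?leIl ?leIr.
Qed.

Section MaximalFilter.
Variables (J : L -> Prop) (F : L -> Prop).
Hypotheses (idealJ : is_ideal J) (filterF : is_filter F) (FJ : forall x, F x -> ~ J x).
Hypothesis maxF : forall G, is_filter G -> (forall x, F x -> G x) ->
  (forall x, G x -> ~ J x) -> forall x, G x -> F x.

Let extend x z := exists2 f, F f & f `&` x <= z.

Let extend_filter x : is_filter (extend x).
Proof.
case: filterF => FT Fup FI; split.
- by exists \top; rewrite ?lex1.
- by move=> y z [f Ff le_fy] le_yz; exists f => //; apply: le_trans le_yz.
- move=> y z [f Ff le_fy] [f' Ff' le_fz]; exists (f `&` f'); first exact: FI.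
  by rewrite lexI (le_trans _ le_fy) ?(le_trans _ le_fz) // leI2 ?leIl ?leIr.
Qed.

Let extend_meets_ideal x : ~ F x -> exists2 f, F f & J (f `&` x).
Proof.
move=> Fx; apply: contrapT => noJ; apply/Fx/(maxF (extend_filter x)).
- by move=> y Fy; exists y; rewrite ?leIl.
- move=> y [f Ff le_fy] Jy; apply: noJ; exists f => //.
  by case: idealJ => _ Jdown _; apply: Jdown Jy le_fy.
- by exists \top; [case: filterF | rewrite meet1x].
Qed.

Lemma maximal_filter_prime x y : F (x `|` y) -> F x \/ F y.
Proof.
move=> Fxy; apply: contrapT => /not_orP[Fx Fy].
have [f Ff Jfx] := extend_meets_ideal Fx; have [f' Ff' Jfy] := extend_meets_ideal Fy.
case: filterF idealJ => _ Fup FI [_ Jdown JU].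
apply: (FJ (FI _ _ (FI _ _ Ff Ff') Fxy)); apply: Jdown (JU _ _ Jfx Jfy) _.
by rewrite meetUr leU2 // leI2 ?leIl ?leIr.
Qed.

End MaximalFilter.

Lemma prime_filter_separation J a : is_ideal J -> ~ J a ->
  exists p, [/\ prime_filter p, p a & forall x, J x -> ~ p x].
Proof.
move=> idealJ Ja; case: (idealJ) => J0 Jdown JU.
(* [Zorn_bigcup] also bounds the empty chain, so we maximize sets [X] whose union
   with the principal filter of [a] is a filter avoiding [J]. *)
pose up X z := X z \/ a <= z.
pose P X := is_filter (up X) /\ forall z, up X z -> ~ J z.
have P0 : P (fun _ => False).
  split=> [|z [//|le_az] Jz]; last exact/Ja/(Jdown _ _ Jz le_az).
  split=> [|y z [//|le_ay] le_yz|y z [//|le_ay] [//|le_az]]; right.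
  - exact: lex1.
  - exact: le_trans le_yz.
  - by rewrite lexI le_ay.
have [A [[filterA AJ] maxA]] : exists A, P A /\ forall B, classical_sets.proper A B -> ~ P B.
  apply: classical_sets.Zorn_bigcup => C CP Ctot; set U := classical_sets.bigcup _ _.
  have directed y z : up U y -> up U z ->
      exists X, [/\ P X, up X y, up X z & forall t, X t -> U t].
    case=> [[X CX Xy]|le_ay] [[Y CY Yz]|le_az].
    - have [XY|YX] := Ctot X Y CX CY.
        by exists Y; split; [exact: CP | left; apply: XY | left | move=> t; exists Y].
      by exists X; split; [exact: CP | left | left; apply: YX | move=> t; exists X].
    - by exists X; split; [exact: CP | left | right | move=> t; exists X].
    - by exists Y; split; [exact: CP | right | left | move=> t; exists Y].
    - by exists (fun _ => False); split; [| right | right |].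
  have up_mono X y : (forall t, X t -> U t) -> up X y -> up U y.
    by move=> XC [/XC|]; [left | right].
  split; first split.
  - by right; rewrite lex1.
  - move=> y z [[X CX Xy]|le_ay] le_yz; last by right; apply: le_trans le_yz.
    have [[_ upX _] _] := CP X CX.
    by case: (upX y z (or_introl Xy) le_yz) => [Xz|]; [left; exists X | right].
  - move=> y z Uy Uz; have [X [[[_ _ XI] _] Xy Xz XC]] := directed y z Uy Uz.
    exact/up_mono/XI.
  - by move=> y Uy; have [X [[_ XJ] Xy _ _]] := directed y y Uy Uy; apply: XJ.
have up_A_maximal : forall G, is_filter G -> (forall x, up A x -> G x) ->
    (forall x, G x -> ~ J x) -> forall x, G x -> up A x.
  move=> G [GT Gup GI] AG GJ x Gx; apply: contrapT => Ax; apply: (maxA G).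
    by split=> [z Az|]; [apply: AG; left | move=> GA; apply/Ax; left; apply: GA].
  have upG z : up G z -> G z by case=> // /(Gup a); apply; apply: AG; right.
  split=> [|z /upG]; last exact: GJ.
  split=> [|y z /upG Gy le_yz|y z /upG Gy /upG Gz]; left; auto.
  exact: Gup Gy le_yz.
case: (filterA) => AT Aup AI.
exists (up A); split; [split=> // | by right | by move=> x Jx /AJ].
- by move/AJ; apply.
- exact: maximal_filter_prime idealJ filterA AJ up_A_maximal.
Qed.

Lemma height_ge_mono q p n : (forall x, q x -> p x) -> height_ge q n -> height_ge p n.
Proof.
case: n => // n qp [r [pr [[rq [x [qx rx]]] hr]]].
exists r; split=> //; split=> //; split=> [y /rq/qp //|].
by exists x; split=> //; apply: qp.
Qed.

Section CoHeyting.
Variable sub : L -> L -> L.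
Hypothesis subP : is_coheyting sub.

Lemma sub_min a b c : a <= b `|` c -> sub a b <= c.
Proof. by case: (subP a b) => _; apply. Qed.

Lemma le_subU a b : a <= b `|` sub a b.
Proof. by case: (subP a b). Qed.

Lemma subxx a : sub a a = \bot.
Proof. by apply/le_anti; rewrite le0x andbT sub_min // joinx0. Qed.

Lemma prime_filter_sub p a b : prime_filter p -> p a -> ~ p b -> p (sub a b).
Proof.
move=> pp pa pb; have /(prime_filterU _ _ pp) := prime_filter_up pp pa (le_subU a b).
by case.
Qed.

Lemma prime_filter_sub_below p a b : prime_filter p -> p (sub a b) ->
  exists q, [/\ prime_filter q, forall x, q x -> p x, q a & ~ q b].
Proof.
move=> pp pab; pose J x := exists2 c, ~ p c & x <= c `|` b.
have idealJ : is_ideal J.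
  split=> [|x y [c pc le_yc] le_xy|x y [c pc le_xc] [c' pc' le_yc']].
  - by exists \bot; [exact: prime_filter0 | rewrite le0x].
  - by exists c => //; apply: le_trans le_yc.
  - exists (c `|` c'); first by move/(prime_filterU _ _ pp); case.
    by rewrite leUx (le_trans le_xc) ?(le_trans le_yc') // leU2 ?leUl ?leUr.
have Ja : ~ J a.
  by case=> c pc le_ac; apply/pc/(prime_filter_up pp pab)/sub_min; rewrite joinC.
have [q [pq qa qJ]] := prime_filter_separation idealJ Ja.
exists q; split=> // [x qx|].
  by apply: contrapT => px; apply: (qJ x) => //; exists x; rewrite ?leUl.
by apply: qJ; exists \bot; [exact: prime_filter0 | rewrite join0x].
Qed.

Lemma sub_height_ge d a b :
    (forall q, prime_filter q -> ~ height_ge q d -> q a <-> q b) ->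
  forall p, prime_filter p -> p (sub a b) -> height_ge p d.
Proof.
move=> agree p pp pab; apply: contrapT => hp.
have [q [pq qp qa qb]] := prime_filter_sub_below pp pab.
have hq : ~ height_ge q d by move/(height_ge_mono qp).
exact/qb/(agree q pq hq).
Qed.

Section Generated.
Variables (n : nat) (g : 'I_n -> L).
Hypothesis gen_g : generates sub g.

Lemma prime_filter_sub_transfer p p' a b : prime_filter p -> prime_filter p' ->
    (forall q, prime_filter q -> strict_sub q p -> strict_sub q p') ->
    (p a <-> p' a) -> (p b <-> p' b) -> p (sub a b) -> p' (sub a b).
Proof.
move=> pp pp' below pa pb pab; have [q [pq qp qa qb]] := prime_filter_sub_below pp pab.
have [pq_eq|/existsNP[z /not_implyP[pz qz]]] := pselect (forall z, p z -> q z).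
  by apply: prime_filter_sub => //; [apply/pa/qp | move/pb/pq_eq].
have [qp' _] := below q pq (conj qp (ex_intro _ z (conj pz qz))).
by apply: qp'; apply: prime_filter_sub.
Qed.

Lemma prime_filter_eq p p' : prime_filter p -> prime_filter p' ->
    (forall i, p (g i) <-> p' (g i)) ->
    (forall q, prime_filter q -> strict_sub q p <-> strict_sub q p') ->
  p = p'.
Proof.
move=> pp pp' pg below.
have below_l q : prime_filter q -> strict_sub q p -> strict_sub q p' by move/below=> [].
have below_r q : prime_filter q -> strict_sub q p' -> strict_sub q p by move/below=> [].
suff eval_eq t : p (ceval sub g t) <-> p' (ceval sub g t).
  by apply: funext => x; apply: propext; have [t <-] := gen_g x.
elim: t => [i|||t1 IH1 t2 IH2|t1 IH1 t2 IH2|t1 IH1 t2 IH2] //=.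
- by split=> [/(prime_filter0 pp) | /(prime_filter0 pp')].
- by split=> _; apply: prime_filterT.
- by rewrite (prime_filterU _ _ pp) (prime_filterU _ _ pp') IH1 IH2.
- by rewrite (prime_filterI _ _ pp) (prime_filterI _ _ pp') IH1 IH2.
- by split; apply: prime_filter_sub_transfer => //; apply: iff_sym.
Qed.

Lemma low_height_primes_enum h : exists N (P : 'I_N -> L -> Prop),
  forall p, prime_filter p -> ~ height_ge p h -> exists i, P i = p.
Proof.
elim: h => [|h [N [P enumP]]]; first by exists 0, (fun _ _ => False) => p _ /(_ I).
pose K : finType := ({ffun 'I_n -> bool} * {ffun 'I_N -> bool})%type.
pose key p : K := ([ffun i => `[< p (g i) >]], [ffun i => `[< strict_sub (P i) p >]]).
pose low p := prime_filter p /\ ~ height_ge p h.+1.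
have below_low q p : prime_filter q -> strict_sub q p -> low p -> ~ height_ge q h.
  by move=> pq qp [_ hp] hq; apply: hp; exists q.
have [R reprR] := finite_representatives low key (inhabits (fun _ => False)).
exists #|K|, (fun j => R (enum_val j)) => p pp hp.
exists (enum_rank (key p)); rewrite enum_rankK.
have [lowR [key_g key_below]] := reprR p (conj pp hp).
have [pR _] := lowR; have belowR := ffun_asbool_eq_equiv key_below.
apply: (prime_filter_eq pR pp (ffun_asbool_eq_equiv key_g)) => q pq; split=> qp.
- have [i Pq] := enumP q pq (below_low q _ pq qp lowR); rewrite -Pq in qp *.
  exact/belowR.
- have [i Pq] := enumP q pq (below_low q _ pq qp (conj pp hp)); rewrite -Pq in qp *.
  exact/belowR.
Qed.

Lemma generated_precompact : precompact sub.
Proof.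
move=> d _; have [N [P enumP]] := low_height_primes_enum d.
pose key a := [ffun i : 'I_N => `[< P i a >]].
have [R reprR] := finite_representatives (fun _ => True) key (inhabits \bot).
exists [seq R k | k <- enum {: {ffun 'I_N -> bool}}] => a.
have key_eq := ffun_asbool_eq_equiv (reprR a I).2.
have agree q : prime_filter q -> ~ height_ge q d -> q (R (key a)) <-> q a.
  by move=> pq hq; have [i <-] := enumP q pq hq; apply: key_eq.
exists (R (key a)); first by rewrite map_f ?mem_enum.
move=> p pp /(prime_filterU _ _ pp)[pab|pba].
- by apply: (sub_height_ge _ pp pab) => q pq hq; apply: iff_sym; apply: agree.
- exact: (sub_height_ge agree pp pba).
Qed.

End Generated.
End CoHeyting.
End PrimeFilters.

Section FiniteSublattice.
Context {disp : Order.disp_t} {L : tbDistrLatticeType disp} (s : seq L).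

(* Every element of the sublattice generated by [s] is a join of meets of elements of [s]. *)
Definition join_of_meets (F : {set {set 'I_(size s)}}) : L :=
  \join_(S in F) \meet_(i in S) nth \bot s i.

Definition in_sublattice : {pred L} := fun x => [exists F, join_of_meets F == x].

Lemma in_sublatticeI : meet_closed in_sublattice.
Proof.
move=> _ _ /existsP[F /eqP <-] /existsP[G /eqP <-]; apply/existsP.
exists [set S :|: T | S in F, T in G]; apply/eqP/le_anti/andP; split.
  apply/joinsP => _ /imset2P[S T SF TG ->]; rewrite meets_setU lexI.
  by rewrite leIxl ?leIxr ?(joins_sup _ SF) ?(joins_sup _ TG).
rewrite meetC meet_joinsr; apply/joinsP => S SF.
rewrite meetC meet_joinsr; apply/joinsP => T TG.
by apply: (joins_min (imset2_f _ SF TG)); rewrite meets_setU.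
Qed.

Lemma in_sublatticeU : join_closed in_sublattice.
Proof.
move=> _ _ /existsP[F /eqP <-] /existsP[G /eqP <-]; apply/existsP.
by exists (F :|: G); rewrite /join_of_meets joins_setU.
Qed.

Lemma in_sublattice0 : \bot \in in_sublattice.
Proof. by apply/existsP; exists set0; rewrite /join_of_meets big_set0. Qed.

Lemma in_sublattice1 : \top \in in_sublattice.
Proof. by apply/existsP; exists [set set0]; rewrite /join_of_meets big_set1 big_set0. Qed.

Lemma mem_sublattice x : x \in s -> in_sublattice x.
Proof.
move=> xs; have xi : (index x s < size s)%N by rewrite index_mem.
apply/existsP; exists [set [set Ordinal xi]].
by rewrite /join_of_meets !big_set1 /= nth_index.
Qed.

Definition sublattice := {x : L | in_sublattice x}.
HB.instance Definition _ := [isSub of sublattice for (@proj1_sig L (fun x => in_sublattice x))].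
HB.instance Definition _ := [Choice of sublattice by <:].
HB.instance Definition _ := Order.isTBLatticeClosed.Build disp L in_sublattice
  in_sublatticeI in_sublatticeU in_sublattice0 in_sublattice1.
HB.instance Definition _ := [SubChoice_isTBSubLattice of sublattice by <: with disp].

Lemma sublattice_meetUl : @left_distributive sublattice sublattice Order.meet Order.join.
Proof. by move=> x y z; apply: val_inj => /=; rewrite meetUl. Qed.
HB.instance Definition _ :=
  Order.Lattice_Meet_isDistrLattice.Build disp sublattice sublattice_meetUl.

Lemma join_of_meets_in F : in_sublattice (join_of_meets F).
Proof. by apply/existsP; exists F. Qed.

Definition sublattice_enum F : sublattice := exist _ (join_of_meets F) (join_of_meets_in F).

Lemma sublattice_enum_surj (x : sublattice) : exists F, sublattice_enum F = x.
Proof.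
by case: x => x /[dup] /existsP[F /eqP ex] xs; exists F; apply: val_inj.
Qed.

(* A finite distributive lattice is co-Heyting: take the meet of all candidates. *)
Definition sublattice_sub (x y : sublattice) : sublattice :=
  \meet_(F | x <= y `|` sublattice_enum F) sublattice_enum F.

Lemma sublattice_coheyting : is_coheyting sublattice_sub.
Proof.
move=> x y; split; first by rewrite /sublattice_sub join_meetsr; apply/meetsP => F.
by move=> c; have [F <-] := sublattice_enum_surj c; apply: meets_inf.
Qed.

End FiniteSublattice.

Section Homomorphisms.
Context {d1 : Order.disp_t} {L : tbDistrLatticeType d1}
  {d2 : Order.disp_t} {M : tbDistrLatticeType d2}
  (subL : L -> L -> L) (subM : M -> M -> M) (f : L -> M).
Hypothesis f_hom : coheyting_hom subL subM f.

Lemma hom_ceval n (g : 'I_n -> L) (u : cterm n) :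
  f (ceval subL g u) = ceval subM (fun i => f (g i)) u.
Proof.
case: f_hom => f0 f1 fU fI fS.
by elim: u => [i|||a IHa b IHb|a IHa b IHb|a IHa b IHb] //=; rewrite ?fU ?fI ?fS ?IHa ?IHb.
Qed.

Lemma hom_ker_ideal : is_ideal (fun x => f x = \bot).
Proof.
case: f_hom => f0 _ fU _ _; split=> // [x y fy /join_idPr le_xy|x y fx fy].
  by apply/le_anti; rewrite le0x andbT -fy; apply/join_idPr; rewrite -fU le_xy.
by rewrite fU fx fy joinx0.
Qed.

Hypotheses (subLP : is_coheyting subL) (subMP : is_coheyting subM).
Variables (K : finType) (enc : K -> M).
Hypothesis enc_surj : forall y, exists k, enc k = y.

Let hom_image (q : L -> Prop) := [set k | `[< exists2 y, q y & f y = enc k >]].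

(* Below a prime filter avoiding the kernel of [f], distinct prime filters have
   distinct images: if [f y = f x] then [subL y x] lies in the kernel. *)
Let image_proper p q q' : prime_filter p -> (forall x, p x -> f x <> \bot) ->
  prime_filter q' -> strict_sub q' q -> (forall x, q x -> p x) ->
  hom_image q' \proper hom_image q.
Proof.
move=> pp pf pq' [q'q [x [qx q'x]]] qp; apply/properP; split.
  by apply/subsetP => k; rewrite !inE => /asboolP[y /q'q qy fy]; apply/asboolP; exists y.
have [k fx] := enc_surj (f x); exists k; first by rewrite inE; apply/asboolP; exists x.
rewrite inE; apply/asboolPn => -[y q'y]; rewrite fx => fyx.
have /(prime_filterU _ _ pq')[//|q'yx] := prime_filter_up pq' q'y (le_subU subLP y x).
apply: (pf (subL y x)); first exact/qp/q'q.
by case: f_hom => _ _ _ _ ->; rewrite fyx subxx.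
Qed.

Lemma hom_finite_height p : prime_filter p -> (forall x, p x -> f x <> \bot) ->
  ~ height_ge p #|K|.+1.
Proof.
move=> pp pf.
suff chain r q : prime_filter q -> (forall x, q x -> p x) -> height_ge q r ->
    (r <= #|hom_image q|)%N.
  by move/(chain _ _ pp (fun x px => px)); rewrite ltnNge max_card.
elim: r q => // r IH q pq qp [q' [pq' [q'q hq']]].
apply: leq_trans (proper_card (image_proper pp pf pq' q'q qp)).
by apply: IH => // x /q'q.1/qp.
Qed.

End Homomorphisms.

Section FinitelyPresented.
Context {disp : Order.disp_t} {L : tbDistrLatticeType disp}.
Variable sub : L -> L -> L.
Hypothesis subP : is_coheyting sub.

Lemma val_sublattice_sub s (x y : sublattice s) : in_sublattice s (sub (val x) (val y)) ->
  val (sublattice_sub x y) = sub (val x) (val y).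
Proof.
move=> xy_in; pose z : sublattice s := exist (fun w => in_sublattice s w) _ xy_in.
have -> : sub (val x) (val y) = val z by [].
congr val; apply/le_anti/andP; split.
  apply: (sub_min (@sublattice_coheyting _ _ s)).
  by change (val x <= val y `|` sub (val x) (val y)); apply: le_subU.
change (sub (val x) (val y) <= val (sublattice_sub x y)); apply: (sub_min subP).
by change (x <= y `|` sublattice_sub x y); apply: le_subU; apply: sublattice_coheyting.
Qed.

Section Terms.
Variables (n : nat) (g : 'I_n -> L).

Fixpoint subterm_values (u : cterm n) : seq L := ceval sub g u ::
  match u with
  | CJoin a b | CMeet a b | CSub a b => subterm_values a ++ subterm_values b
  | _ => [::]
  end.

Lemma ceval_sublattice s (h : 'I_n -> sublattice s) u :
    (forall i, val (h i) = g i) -> {subset subterm_values u <= s} ->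
  val (ceval (@sublattice_sub _ _ s) h u) = ceval sub g u.
Proof.
move=> hg; elim: u => [i|||a IHa b IHb|a IHa b IHb|a IHa b IHb] /= us;
  [exact: hg | by [] | by [] | .. ].
all: have /IHa IHa' : {subset subterm_values a <= s}
  by move=> x xa; apply: us; rewrite inE mem_cat xa orbT.
all: have /IHb IHb' : {subset subterm_values b <= s}
  by move=> x xb; apply: us; rewrite inE mem_cat xb !orbT.
- by rewrite IHa' IHb'.
- by rewrite IHa' IHb'.
rewrite val_sublattice_sub IHa' IHb' //.
by apply: mem_sublattice; apply: us; rewrite mem_head.
Qed.

End Terms.

Lemma fin_presented_finite_image : fin_presented sub ->
  forall a, exists s (f : L -> sublattice s),
    coheyting_hom sub (@sublattice_sub _ _ s) f /\ val (f a) = a.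
Proof.
case=> n [m [g [E [gen_g E_g univ]]]] a; have [t ta] := gen_g a.
pose E_values j := subterm_values g (E j).1 ++ subterm_values g (E j).2.
pose s := subterm_values g t ++ flatten [seq E_values j | j <- enum 'I_m] ++ codom g.
have t_s : {subset subterm_values g t <= s} by move=> x xt; rewrite mem_cat xt.
have E_s j : {subset E_values j <= s}.
  move=> x xE; rewrite !mem_cat; apply/or3P; apply: Or32.
  by apply/flattenP; exists (E_values j); rewrite ?map_f ?mem_enum.
have g_s i : g i \in s by rewrite !mem_cat codom_f !orbT.
pose h i : sublattice s := exist (fun x => in_sublattice s x) (g i) (mem_sublattice (g_s i)).
have hg i : val (h i) = g i by [].
have [f [f_hom fg]] :
    exists f, coheyting_hom sub (@sublattice_sub _ _ s) f /\ forall i, f (g i) = h i.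
  apply: univ => [|j]; first exact: sublattice_coheyting.
  apply: val_inj; rewrite !(ceval_sublattice hg) ?E_g //;
    by move=> x xE; apply: (E_s j); rewrite mem_cat xE ?orbT.
have fgh : (fun i => f (g i)) = h by apply: funext.
exists s, f; split=> //.
by rewrite -ta (hom_ceval f_hom) fgh (ceval_sublattice hg).
Qed.

Lemma fin_presented_hausdorff : fin_presented sub -> hausdorff (L := L).
Proof.
move=> L_fp a a0; have [s [f [f_hom fa]]] := fin_presented_finite_image L_fp a.
have fa0 : f a <> \bot by move=> fa0; apply: a0; rewrite -fa fa0.
have [p [pp pa p_ker]] := prime_filter_separation (hom_ker_ideal f_hom) fa0.
exists p; split=> //; exists #|{: {set {set 'I_(size s)}}}|.+1.
apply: (hom_finite_height f_hom subP (@sublattice_coheyting _ _ s)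
  (@sublattice_enum_surj _ _ s) pp).
by move=> x px fx; apply: (p_ker x fx).
Qed.

End FinitelyPresented.

Theorem corollary5p5 :
  (forall (d : Order.disp_t) (L : tbDistrLatticeType d) (sub : L -> L -> L),
     is_coheyting sub -> fin_generated sub -> precompact sub) /\
  (forall (d : Order.disp_t) (L : tbDistrLatticeType d) (sub : L -> L -> L),
     is_coheyting sub -> fin_presented sub -> precompact sub /\ @hausdorff d L).
Proof.
split=> [d L sub subP [n [g gen_g]] | d L sub subP L_fp].
  exact: (generated_precompact subP gen_g).
split; last exact: fin_presented_hausdorff.
have [n [_ [g [_ [gen_g _ _]]]]] := L_fp.
exact: (generated_precompact subP gen_g).
Qed.
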